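(* Let $\mathcal{P}\subset K[x_1,\ldots,x_n]$ be a chordal polynomial set with $x_1<\cdots<x_n$ as a perfect elimination ordering. For each $i=1,\ldots,n$ with $\mathcal{P}^{(i)}\neq\emptyset$, let $T_i\in K[x_1,\ldots,x_n]$ be a polynomial with $\mathrm{lv}(T_i)=x_i$ and $\mathrm{supp}(T_i)\subseteq \mathrm{supp}(\mathcal{P}^{(i)})$. For $i$ with $\mathcal{P}^{(i)}=\emptyset$, $T_i$ is absent. Then $\mathcal{T}=[T_1,\ldots,T_n]$, with the absent entries omitted, is a triangular set and $G(\mathcal{T})\subseteq G(\mathcal{P})$. Moreover, if $\mathrm{supp}(T_i)=\mathrm{supp}(\mathcal{P}^{(i)})$ for every $i$ with $\mathcal{P}^{(i)}\neq\emptyset$, then $G(\mathcal{T})=G(\mathcal{P})$.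
   Context: Let $K$ be a field and $K[x_1,\ldots,x_n]$ the polynomial ring, with the variables ordered $x_1<\cdots<x_n$. For a polynomial $F$, $\mathrm{supp}(F)$ is the set of variables effectively appearing in $F$. For a set of polynomials $\mathcal{P}$, $\mathrm{supp}(\mathcal{P})=\bigcup_{F\in\mathcal{P}}\mathrm{supp}(F)$. For a nonconstant $F$, $\mathrm{lv}(F)$ is the greatest variable in $\mathrm{supp}(F)$. For a polynomial set $\mathcal{P}$ and $1\le i\le n$, $\mathcal{P}^{(i)}=\{P\in\mathcal{P}:\mathrm{lv}(P)=x_i\}$; constants belong to no $\mathcal{P}^{(i)}$. The associated graph $G(\mathcal{P})$ is the undirected graph whose vertex set is $\mathrm{supp}(\mathcal{P})$, with an edge between distinct $x_i,x_j$ iff some $F\in\mathcal{P}$ has $x_i,x_j\in\mathrm{supp}(F)$. For graphs, $G\subseteq G'$ means that $G$ is a subgraph of $G'$, i.e. both the vertex set and the edge set are contained. An ordering of the vertices of a graph is a perfect elimination ordering if, for every vertex $v$, the set consisting of $v$ and all neighbours of $v$ smaller than $v$ is a clique. A polynomial set $\mathcal{P}$ is called chordal with $x_1<\cdots<x_n$ as a perfect elimination ordering if the restriction of this ordering to $\mathrm{supp}(\mathcal{P})$ is a perfect elimination ordering of $G(\mathcal{P})$. A triangular set is an ordered set $[T_1,\ldots,T_r]$ of nonconstant polynomials with $\mathrm{lv}(T_1)<\cdots<\mathrm{lv}(T_r)$. *)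

(* Variable x_(i+1) is represented by i : 'I_n, and the
   order x_1 < ... < x_n is the natural order of 'I_n. *)
From Stdlib Require List ClassicalEpsilon.
From HB Require Import structures.
From mathcomp Require Import all_boot all_order all_algebra.
Set Implicit Arguments. Unset Strict Implicit. Unset Printing Implicit Defensive.
Import GRing.Theory.
Local Open Scope ring_scope.

Definition mpoly (n : nat) (K : fieldType) :=
  { f : n.-tuple nat -> K | exists s : seq (n.-tuple nat), forall m, f m != 0 -> m \in s }.

Definition coef n K (F : mpoly n K) (m : n.-tuple nat) : K := proj1_sig F m.

Definition supp n K (F : mpoly n K) (i : 'I_n) : Prop :=
  exists m, coef F m != 0 /\ (0 < tnth m i)%N.

Definition suppSet n K (P : mpoly n K -> Prop) (i : 'I_n) : Prop :=
  exists F, P F /\ supp F i.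

Definition is_lv n K (F : mpoly n K) (i : 'I_n) : Prop :=
  supp F i /\ forall j, supp F j -> (j <= i)%N.

Definition nonconstant n K (F : mpoly n K) : Prop := exists i, supp F i.

Definition Plv n K (P : mpoly n K -> Prop) (i : 'I_n) : mpoly n K -> Prop :=
  fun F => P F /\ is_lv F i.

Record graph (n : nat) := Graph { gV : 'I_n -> Prop; gE : 'I_n -> 'I_n -> Prop }.

Definition assoc_graph n K (P : mpoly n K -> Prop) : graph n :=
  Graph (suppSet P)
        (fun u v => u <> v /\ exists F, P F /\ supp F u /\ supp F v).

Definition subgraph n (G G' : graph n) : Prop :=
  (forall v, gV G v -> gV G' v) /\ (forall u v, gE G u v -> gE G' u v).

Definition graph_eq n (G G' : graph n) : Prop := subgraph G G' /\ subgraph G' G.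

Definition is_peo n (G : graph n) : Prop :=
  forall v, gV G v ->
    let C := fun u => u = v \/ (gV G u /\ gE G u v /\ (u < v)%N) in
    forall a b, C a -> C b -> a <> b -> gE G a b.

Definition chordal n K (P : mpoly n K -> Prop) : Prop := is_peo (assoc_graph P).

Definition lv_lt n K (F G : mpoly n K) : Prop :=
  exists i j, is_lv F i /\ is_lv G j /\ (i < j)%N.

Definition triangular_set n K (s : list (mpoly n K)) : Prop :=
  List.Forall (@nonconstant n K) s /\ List.ForallOrdPairs (@lv_lt n K) s.

Definition pb (Q : Prop) : bool :=
  if ClassicalEpsilon.excluded_middle_informative Q then true else false.

Definition Tlist n K (P : mpoly n K -> Prop) (T : 'I_n -> mpoly n K) : list (mpoly n K) :=
  [seq T i | i <- enum 'I_n & pb (exists F, Plv P i F)].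

Definition list_set n K (s : list (mpoly n K)) : mpoly n K -> Prop :=
  fun F => List.In F s.

(* Every T_i is built from the variables of the polynomials of P with
   leading variable x_i, and by chordality these variables together with x_i
   form a clique of G(P): this is the perfect elimination condition at x_i.
   Hence the edges contributed by T_i are already edges of G(P), and the
   leading variables of the T_i increase with i, so T is triangular.
   Conversely, when supp T_i = supp P^(i), every polynomial F of P lies in
   P^(lv F), so its vertices and edges are also contributed by T_(lv F). *)
From mathcomp Require Import all_boot all_order all_algebra.

Set Implicit Arguments.
Unset Strict Implicit.

Lemma In_map (A : eqType) (B : Type) (f : A -> B) (s : seq A) (x : B) :
  List.In x (map f s) <-> exists2 y, y \in s & x = f y.
Proof.
elim: s => [|a s IH] /=; first by split=> // [[]].
rewrite IH; split=> [[<-|[y ys ->]]|[y]]; first by exists a; rewrite ?mem_head.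
  by exists y; rewrite // in_cons ys orbT.
by rewrite in_cons => /orP [/eqP-> ->|ys ->]; [left|right; exists y].
Qed.

Lemma ForallOrdPairs_map (A : eqType) (B : Type) (e : rel A)
    (R : B -> B -> Prop) (f : A -> B) (s : seq A) :
  transitive e -> sorted e s ->
  {in s &, forall x y, e x y -> R (f x) (f y)} ->
  List.ForallOrdPairs R (map f s).
Proof.
move=> e_trans; elim: s => [|a s IH] /= sorted_as R_f; first by constructor.
have a_min : all (e a) s := order_path_min e_trans sorted_as.
constructor.
  apply/List.Forall_forall => _ /In_map [y ys ->].
  by apply: R_f; rewrite ?mem_head ?in_cons ?ys ?orbT ?(allP a_min).
apply: IH; first exact: path_sorted sorted_as.
by move=> x y xs ys; apply: R_f; rewrite in_cons ?xs ?ys orbT.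
Qed.

Lemma pbP (Q : Prop) : pb Q <-> Q.
Proof. by rewrite /pb; case: ClassicalEpsilon.excluded_middle_informative. Qed.

Lemma exists_lv n (K : fieldType) (F : mpoly n K) (j : 'I_n) :
  supp F j -> exists i, is_lv F i.
Proof.
move=> /pbP Fj.
case: (@arg_maxnP _ j (fun i => pb (supp F i)) val Fj) => i /pbP Fi i_max.
by exists i; split=> // k /pbP /i_max.
Qed.

Section TriangularSetFromChordal.

Variables (K : fieldType) (n : nat) (P : mpoly n K -> Prop) (T : 'I_n -> mpoly n K).

Lemma in_Tlist (F : mpoly n K) :
  list_set (Tlist P T) F <-> exists2 i, (exists G, Plv P i G) & F = T i.
Proof.
rewrite /list_set /Tlist In_map; split=> [[i]|[i Pi ->]].
  by rewrite mem_filter => /andP [/pbP Pi _] ->; exists i.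
by exists i; rewrite // mem_filter mem_enum andbT; apply/pbP.
Qed.

Lemma suppSet_Plv_clique (i u v : 'I_n) :
  chordal P -> suppSet (Plv P i) u -> suppSet (Plv P i) v -> u <> v ->
  gE (assoc_graph P) u v.
Proof.
move=> chordalP Pi_u Pi_v; have [F [[PF [Fi _]] _]] := Pi_u.
have i_vertex : gV (assoc_graph P) i by exists F.
suff below_i w : suppSet (Plv P i) w ->
    w = i \/ gV (assoc_graph P) w /\ gE (assoc_graph P) w i /\ (w < i)%N.
  move=> uv; apply: (chordalP i i_vertex) uv.
    by case: (below_i u Pi_u) => [->|]; [left | right].
  by case: (below_i v Pi_v) => [->|]; [left | right].
move=> [G [[PG [Gi G_max]] Gw]]; have [-> | wi] := eqVneq w i; first by left.
right; split; first by exists G.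
split; first by split; [exact/eqP | exists G].
by rewrite ltn_neqAle wi G_max.
Qed.

Lemma Tlist_triangular :
  (forall i, (exists F, Plv P i F) -> is_lv (T i) i) ->
  triangular_set (Tlist P T).
Proof.
move=> T_lv; split.
  by apply/List.Forall_forall => _ /in_Tlist [i /T_lv [Ti _] ->]; exists i.
apply: (@ForallOrdPairs_map _ _ (fun i j : 'I_n => (i < j)%N)).
- by move=> j i k; apply: ltn_trans.
- apply: sorted_filter; first by move=> j i k; apply: ltn_trans.
  by move: (iota_ltn_sorted 0 n); rewrite -val_enum_ord sorted_map.
move=> i j; rewrite !mem_filter => /andP [/pbP /T_lv Ti _] /andP [/pbP /T_lv Tj _].
by exists i, j.
Qed.

Lemma assoc_graph_Tlist_sub :
  chordal P ->
  (forall i, (exists F, Plv P i F) ->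
     forall j, supp (T i) j -> suppSet (Plv P i) j) ->
  subgraph (assoc_graph (list_set (Tlist P T))) (assoc_graph P).
Proof.
move=> chordalP T_supp; split.
  move=> v [_ [/in_Tlist [i Pi ->] Tv]].
  by have [G [[PG _] Gv]] := T_supp i Pi v Tv; exists G.
move=> u v [uv [_ [/in_Tlist [i Pi ->] [Tu Tv]]]].
exact: suppSet_Plv_clique chordalP (T_supp i Pi u Tu) (T_supp i Pi v Tv) uv.
Qed.

Lemma assoc_graph_sub_Tlist :
  (forall i, (exists F, Plv P i F) ->
     forall j, suppSet (Plv P i) j -> supp (T i) j) ->
  subgraph (assoc_graph P) (assoc_graph (list_set (Tlist P T))).
Proof.
move=> supp_T.
suff T_covers F u : P F -> supp F u ->
    exists2 G, list_set (Tlist P T) G & forall w, supp F w -> supp G w.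
  split=> [v [F [PF Fv]] | u v [uv [F [PF [Fu Fv]]]]].
    by have [G TG FG] := T_covers F v PF Fv; exists G; split; last exact: FG.
  have [G TG FG] := T_covers F u PF Fu.
  by split=> //; exists G; split=> //; split; apply: FG.
move=> PF /exists_lv [i Fi]; have Pi : exists G, Plv P i G by exists F.
exists (T i); first by apply/in_Tlist; exists i.
by move=> w Fw; apply: (supp_T i Pi); exists F.
Qed.

End TriangularSetFromChordal.

Theorem proposition3p1 (K : fieldType) (n : nat) (P : mpoly n K -> Prop)
    (T : 'I_n -> mpoly n K) :
  chordal P ->
  (forall i : 'I_n, (exists F, Plv P i F) ->
     is_lv (T i) i /\ (forall j, supp (T i) j -> suppSet (Plv P i) j)) ->
  triangular_set (Tlist P T) /\
  subgraph (assoc_graph (list_set (Tlist P T))) (assoc_graph P) /\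
  ((forall i : 'I_n, (exists F, Plv P i F) ->
      forall j, supp (T i) j <-> suppSet (Plv P i) j) ->
   graph_eq (assoc_graph (list_set (Tlist P T))) (assoc_graph P)).
Proof.
move=> chordalP T_spec.
have T_lv i (Pi : exists F, Plv P i F) : is_lv (T i) i := (T_spec i Pi).1.
have T_supp i (Pi : exists F, Plv P i F) :
  forall j, supp (T i) j -> suppSet (Plv P i) j := (T_spec i Pi).2.
have sub := assoc_graph_Tlist_sub chordalP T_supp.
split; first exact: Tlist_triangular T_lv.
split=> // supp_eq; split=> //.
by apply: assoc_graph_sub_Tlist => i Pi j /(supp_eq i Pi).
Qed.
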